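(* Let $a,b$ be positive integers with $3\mid a+1$ and $3\mid b+1$. If the Aztec rectangle $\mathcal{AR}_{a,b}$ has a cover by L-trominoes, then $\mathcal{AR}_{a+4,b+4}$ has a cover by L-trominoes.
   Context: A cell is a unit square $[i,i+1]\times[j,j+1]$ with $i,j\in\mathbb{Z}$, labelled $(i,j)$. An L-tromino is a set of three cells equal to a $2\times 2$ block of cells with one cell removed. A cover of a region $R$ (a finite edge-connected set of cells) is a set of pairwise disjoint L-trominoes contained in $R$ whose union is $R$. For positive integers $a,b$, the Aztec rectangle $\mathcal{AR}_{a,b}$ is (up to translation) the region consisting of the cells $(i,j)\in\mathbb{Z}^2$ with $0\le i+j\le 2b$ and $1\le j-i\le 2a+1$; it has $a$ cells along its southwestern side and $b$ cells along its northwestern side. *)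

From Stdlib Require Import ZArith List.
Open Scope Z_scope.

(* A cell (i,j) is the unit square [i,i+1] x [j,j+1]. *)
Definition cell := (Z * Z)%type.

Definition region := cell -> Prop.

Definition in_block (x y : Z) (c : cell) : Prop :=
  x <= fst c <= x + 1 /\ y <= snd c <= y + 1.

(* An L-tromino: a 2x2 block of cells with lower-left cell (x,y)
   with one cell (rx,ry) of the block removed. *)
Record tromino := Tromino { tx : Z; ty : Z; rx : Z; ry : Z }.

Definition valid_tromino (t : tromino) : Prop :=
  in_block (tx t) (ty t) (rx t, ry t).

Definition in_tromino (t : tromino) (c : cell) : Prop :=
  in_block (tx t) (ty t) c /\ c <> (rx t, ry t).

Definition is_cover (R : region) (ts : list tromino) : Prop :=
  (forall t, In t ts -> valid_tromino t) /\
  (forall t, In t ts -> forall c, in_tromino t c -> R c) /\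
  (forall c, R c -> exists t, In t ts /\ in_tromino t c) /\
  (forall i j t1 t2, (i < length ts)%nat -> (j < length ts)%nat -> i <> j ->
     nth_error ts i = Some t1 -> nth_error ts j = Some t2 ->
     forall c, ~ (in_tromino t1 c /\ in_tromino t2 c)).

Definition has_cover (R : region) : Prop := exists ts, is_cover R ts.

Definition aztec_rect (a b : Z) : region :=
  fun c => 0 <= fst c + snd c <= 2 * b /\ 1 <= snd c - fst c <= 2 * a + 1.

(* In the coordinates u = i + j, v = j - i the Aztec rectangle AR_{a,b} is
   the rectangle 0 <= u <= 2b, 1 <= v <= 2a + 1.  Write a = 3K + 2 and
   b = 3M + 2.  The cells of AR_{a+4,b+4} outside AR_{a,b} split into a
   strip of height 8 along the b-side, a strip of width 8 along the a-side
   and an L-shaped corner.  Each strip is an end piece of length 3 followed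
   by blocks of length 6 (this is where 3 | a + 1 and 3 | b + 1 are used);
   the end pieces, the blocks and the corner are translates of five fixed
   regions, each of which has an explicit tromino cover checked by
   computation. *)

From Stdlib Require Import ZArith List Bool Lia.
Import ListNotations.
Open Scope Z_scope.

Definition tromino_disjoint (t1 t2 : tromino) : Prop :=
  forall c, ~ (in_tromino t1 c /\ in_tromino t2 c).

Lemma tromino_disjoint_sym t1 t2 :
  tromino_disjoint t1 t2 -> tromino_disjoint t2 t1.
Proof. intros H c [H1 H2]. apply (H c); auto. Qed.

Lemma ForallOrdPairs_app {A} (R : A -> A -> Prop) l1 l2 :
  ForallOrdPairs R l1 -> ForallOrdPairs R l2 ->
  (forall x y, In x l1 -> In y l2 -> R x y) -> ForallOrdPairs R (l1 ++ l2).
Proof.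
  induction 1 as [|x l1 Hx _ IH]; simpl; intros H2 Hcross; auto.
  constructor.
  - apply Forall_app; split; [exact Hx|].
    rewrite Forall_forall; intros y Hy; apply Hcross; simpl; auto.
  - apply IH; auto.
Qed.

Lemma ForallOrdPairs_map {A B} (R : A -> A -> Prop) (R' : B -> B -> Prop)
    (f : A -> B) l :
  (forall x y, R x y -> R' (f x) (f y)) ->
  ForallOrdPairs R l -> ForallOrdPairs R' (map f l).
Proof.
  intros Hf; induction 1 as [|x l Hx _ IH]; simpl; constructor; auto.
  apply Forall_map; eapply Forall_impl; [|exact Hx]; auto.
Qed.

Lemma pairwise_disjoint_nth_iff ts :
  (forall i j t1 t2, (i < length ts)%nat -> (j < length ts)%nat -> i <> j ->
     nth_error ts i = Some t1 -> nth_error ts j = Some t2 ->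
     forall c, ~ (in_tromino t1 c /\ in_tromino t2 c)) <->
  ForallOrdPairs tromino_disjoint ts.
Proof.
  split.
  - induction ts as [|t ts IH]; simpl; intros H; constructor.
    + rewrite Forall_forall; intros t' Ht'.
      destruct (In_nth_error _ _ Ht') as [n Hn].
      assert ((n < length ts)%nat) by (apply nth_error_Some; congruence).
      intro c; apply (H 0%nat (S n)); simpl; auto; lia.
    + apply IH; intros i j t1 t2 Hi Hj Hij E1 E2.
      apply (H (S i) (S j)); simpl; auto; lia.
  - induction 1 as [|t ts Ht _ IH]; simpl.
    + intros i j t1 t2 Hi; inversion Hi.
    + rewrite Forall_forall in Ht.
      intros [|i] [|j] t1 t2 Hi Hj Hij E1 E2; simpl in *.
      * congruence.
      * injection E1 as <-. apply Ht. eapply nth_error_In; eauto.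
      * injection E2 as <-. apply tromino_disjoint_sym, Ht. eapply nth_error_In; eauto.
      * apply (IH i j); auto; lia.
Qed.

Lemma is_cover_iff R ts :
  is_cover R ts <->
  (forall t, In t ts -> valid_tromino t) /\
  (forall t, In t ts -> forall c, in_tromino t c -> R c) /\
  (forall c, R c -> exists t, In t ts /\ in_tromino t c) /\
  ForallOrdPairs tromino_disjoint ts.
Proof. unfold is_cover; rewrite pairwise_disjoint_nth_iff; tauto. Qed.

Definition region_union (R S : region) : region := fun c => R c \/ S c.

Definition regions_disjoint (R S : region) : Prop := forall c, R c -> S c -> False.

Definition translate (dx dy : Z) (R : region) : region :=
  fun c => R (fst c - dx, snd c - dy).

Definition region_bigunion (n : Z) (Q : Z -> region) : region :=
  fun c => exists j, 0 <= j < n /\ Q j c.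

Lemma has_cover_ext (R S : region) :
  (forall c, R c <-> S c) -> has_cover R -> has_cover S.
Proof.
  intros HRS [ts Hts]; exists ts.
  rewrite is_cover_iff in *; destruct Hts as (Hv & Hin & Hcov & Hd).
  refine (conj _ (conj _ (conj _ _))); auto.
  - intros t Ht c Hc; apply HRS; eauto.
  - intros c Hc; apply Hcov, HRS; auto.
Qed.

Lemma has_cover_union (R S : region) :
  regions_disjoint R S -> has_cover R -> has_cover S ->
  has_cover (region_union R S).
Proof.
  intros HRS [ts1 H1] [ts2 H2]; exists (ts1 ++ ts2).
  rewrite is_cover_iff in *.
  destruct H1 as (Hv1 & Hin1 & Hcov1 & Hd1), H2 as (Hv2 & Hin2 & Hcov2 & Hd2).
  refine (conj _ (conj _ (conj _ _))).
  - intros t Ht; apply in_app_or in Ht as [Ht|Ht]; auto.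
  - intros t Ht c Hc; apply in_app_or in Ht as [Ht|Ht]; [left|right]; eauto.
  - intros c [Hc|Hc]; [destruct (Hcov1 c Hc) as [t [Ht Htc]] |
                       destruct (Hcov2 c Hc) as [t [Ht Htc]]];
      exists t; split; auto; apply in_or_app; auto.
  - apply ForallOrdPairs_app; auto.
    intros t1 t2 Ht1 Ht2 c [Hc1 Hc2]; eauto.
Qed.

Lemma has_cover_empty (R : region) : (forall c, ~ R c) -> has_cover R.
Proof.
  intros HR; exists []; rewrite is_cover_iff; refine (conj _ (conj _ (conj _ _))).
  - intros t [].
  - intros t [].
  - intros c Hc; contradiction (HR c).
  - constructor.
Qed.

Lemma has_cover_bigunion (n : Z) (Q : Z -> region) :
  (forall j, 0 <= j < n -> has_cover (Q j)) ->
  (forall j1 j2, j1 <> j2 -> regions_disjoint (Q j1) (Q j2)) ->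
  has_cover (region_bigunion n Q).
Proof.
  intros HQ Hdisj.
  destruct (Z_lt_le_dec n 0) as [Hn|Hn].
  { apply has_cover_empty; intros c [j [Hj _]]; lia. }
  revert HQ; pattern n; apply natlike_ind; [| |exact Hn]; clear n Hn.
  - intros _; apply has_cover_empty; intros c [j [Hj _]]; lia.
  - intros n Hn IH HQ.
    apply has_cover_ext with
      (R := region_union (region_bigunion n Q) (Q n)).
    { intros c; unfold region_union, region_bigunion; split.
      - intros [[j [Hj Hc]]|Hc]; [exists j | exists n]; split; auto; lia.
      - intros [j [Hj Hc]].
        destruct (Z.eq_dec j n) as [->|Hjn]; [right | left; exists j; split]; auto; lia. }
    apply has_cover_union.
    + intros c [j [Hj Hc1]] Hc2; apply (Hdisj j n) with c; auto; lia.
    + apply IH; intros j Hj; apply HQ; lia.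
    + apply HQ; lia.
Qed.

Definition shift_tromino (dx dy : Z) (t : tromino) : tromino :=
  Tromino (tx t + dx) (ty t + dy) (rx t + dx) (ry t + dy).

Lemma in_shift_tromino dx dy t c :
  in_tromino (shift_tromino dx dy t) c <-> in_tromino t (fst c - dx, snd c - dy).
Proof.
  destruct c as [x y], t as [a b r s]; unfold in_tromino, in_block, shift_tromino; simpl.
  split; intros [H1 H2]; (split; [lia|]); intro E; apply H2;
    injection E as E1 E2; f_equal; lia.
Qed.

Lemma has_cover_translate dx dy (R : region) :
  has_cover R -> has_cover (translate dx dy R).
Proof.
  intros [ts Hts]; exists (map (shift_tromino dx dy) ts).
  rewrite is_cover_iff in *; destruct Hts as (Hv & Hin & Hcov & Hd).
  unfold translate; refine (conj _ (conj _ (conj _ _))).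
  - intros t Ht; apply in_map_iff in Ht as [t0 [<- Ht0]].
    specialize (Hv t0 Ht0); destruct t0; unfold valid_tromino, in_block in *; simpl in *; lia.
  - intros t Ht c Hc; apply in_map_iff in Ht as [t0 [<- Ht0]].
    rewrite in_shift_tromino in Hc; eauto.
  - intros c Hc; destruct (Hcov _ Hc) as [t [Ht Htc]].
    exists (shift_tromino dx dy t); split; [apply in_map; auto|].
    rewrite in_shift_tromino; auto.
  - apply ForallOrdPairs_map with (R := tromino_disjoint); auto.
    intros t1 t2 H12 c; rewrite !in_shift_tromino; apply H12.
Qed.

Definition in_trominob (t : tromino) (c : cell) : bool :=
  (tx t <=? fst c) && (fst c <=? tx t + 1) && (ty t <=? snd c) && (snd c <=? ty t + 1)
  && negb ((fst c =? rx t) && (snd c =? ry t)).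

Lemma in_trominob_spec t c : in_trominob t c = true <-> in_tromino t c.
Proof.
  destruct c as [x y], t as [a b r s]; unfold in_trominob, in_tromino, in_block; simpl.
  rewrite !andb_true_iff, !Z.leb_le, negb_true_iff, <- not_true_iff_false,
    andb_true_iff, !Z.eqb_eq.
  split.
  - intros [[[[H1 H2] H3] H4] H5]; split; [lia|]. intro E; injection E; auto.
  - intros [H1 H2]; repeat split; try lia. intros [-> ->]; auto.
Qed.

Definition valid_trominob (t : tromino) : bool :=
  (tx t <=? rx t) && (rx t <=? tx t + 1) && (ty t <=? ry t) && (ry t <=? ty t + 1).

Lemma valid_trominob_spec t : valid_trominob t = true -> valid_tromino t.
Proof.
  unfold valid_trominob, valid_tromino, in_block; simpl.
  rewrite !andb_true_iff, !Z.leb_le; lia.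
Qed.

Definition block_cells (t : tromino) : list cell :=
  [(tx t, ty t); (tx t + 1, ty t); (tx t, ty t + 1); (tx t + 1, ty t + 1)].

Lemma in_tromino_block_cells t c : in_tromino t c -> In c (block_cells t).
Proof.
  destruct c as [x y], t as [a b r s]; unfold in_tromino, in_block, block_cells; simpl.
  intros [[H1 H2] _].
  assert (x = a \/ x = a + 1) as [-> | ->] by lia;
  assert (y = b \/ y = b + 1) as [-> | ->] by lia; tauto.
Qed.

Fixpoint pairwise_disjointb (ts : list tromino) : bool :=
  match ts with
  | [] => true
  | t :: ts' =>
      forallb (fun t' => forallb (fun c => negb (in_trominob t c && in_trominob t' c))
                                 (block_cells t)) ts'
      && pairwise_disjointb ts'
  end.

Lemma pairwise_disjointb_spec ts :
  pairwise_disjointb ts = true -> ForallOrdPairs tromino_disjoint ts.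
Proof.
  induction ts as [|t ts IH]; cbn [pairwise_disjointb]; intros H; constructor.
  - apply andb_true_iff in H as [H _].
    rewrite Forall_forall; intros t' Ht' c [Hc Hc'].
    rewrite forallb_forall in H; specialize (H t' Ht'); cbv beta in H.
    rewrite forallb_forall in H; specialize (H c (in_tromino_block_cells _ _ Hc)).
    apply in_trominob_spec in Hc; apply in_trominob_spec in Hc'.
    rewrite Hc, Hc' in H; discriminate.
  - apply IH; apply andb_true_iff in H; tauto.
Qed.

Definition Z_range (lo hi : Z) : list Z :=
  map (fun k => lo + Z.of_nat k) (seq 0 (Z.to_nat (hi - lo))).

Lemma in_Z_range lo hi x : lo <= x < hi -> In x (Z_range lo hi).
Proof.
  intros Hx; apply in_map_iff; exists (Z.to_nat (x - lo)); split.
  - rewrite Z2Nat.id; lia.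
  - apply in_seq; lia.
Qed.

Definition cover_check (P : cell -> bool) (box : list cell) (ts : list tromino) : bool :=
  forallb valid_trominob ts &&
  forallb (fun t => forallb (fun c => negb (in_trominob t c) || P c) (block_cells t)) ts &&
  forallb (fun c => negb (P c) || existsb (fun t => in_trominob t c) ts) box &&
  pairwise_disjointb ts.

Lemma is_cover_of_check (R : region) (P : cell -> bool) box ts :
  (forall c, R c <-> P c = true) -> (forall c, R c -> In c box) ->
  cover_check P box ts = true -> is_cover R ts.
Proof.
  intros HP Hbox H; unfold cover_check in H.
  rewrite !andb_true_iff, !forallb_forall in H.
  destruct H as [[[Hv Hin] Hcov] Hd].
  apply is_cover_iff; refine (conj _ (conj _ (conj _ _))).
  - intros t Ht; apply valid_trominob_spec; auto.
  - intros t Ht c Hc; specialize (Hin t Ht); rewrite forallb_forall in Hin.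
    specialize (Hin c (in_tromino_block_cells _ _ Hc)).
    apply in_trominob_spec in Hc; rewrite Hc in Hin; apply HP; exact Hin.
  - intros c Hc; specialize (Hcov c (Hbox c Hc)).
    apply HP in Hc; rewrite Hc in Hcov; apply existsb_exists in Hcov as [t [Ht Htc]].
    exists t; split; auto; apply in_trominob_spec; auto.
  - apply pairwise_disjointb_spec; auto.
Qed.

Definition uv_rect (u0 u1 v0 v1 : Z) : region :=
  fun c => u0 <= fst c + snd c <= u1 /\ v0 <= snd c - fst c <= v1.

Definition uv_rectb (u0 u1 v0 v1 : Z) (c : cell) : bool :=
  (u0 <=? fst c + snd c) && (fst c + snd c <=? u1) &&
  (v0 <=? snd c - fst c) && (snd c - fst c <=? v1).

Lemma uv_rectb_spec u0 u1 v0 v1 c : uv_rect u0 u1 v0 v1 c <-> uv_rectb u0 u1 v0 v1 c = true.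
Proof. unfold uv_rect, uv_rectb; rewrite !andb_true_iff, !Z.leb_le; tauto. Qed.

Definition tile_grid : list cell := list_prod (Z_range (-7) 7) (Z_range 0 14).

(* All five tiles lie in AR_{6,6}, whose cells all lie in [tile_grid]. *)
Lemma is_cover_of_check_in_tile_grid (R : region) (P : cell -> bool) ts :
  (forall c, R c <-> P c = true) -> (forall c, R c -> uv_rect 0 12 1 13 c) ->
  cover_check P tile_grid ts = true -> is_cover R ts.
Proof.
  intros HP Hsub; apply is_cover_of_check; auto.
  intros [x y] Hc; apply Hsub in Hc; unfold uv_rect in Hc; cbn [fst snd] in Hc.
  apply in_prod; apply in_Z_range; lia.
Qed.

Lemma is_cover_uv_rect_of_check u0 u1 v0 v1 ts :
  0 <= u0 -> u1 <= 12 -> 1 <= v0 -> v1 <= 13 ->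
  cover_check (uv_rectb u0 u1 v0 v1) tile_grid ts = true -> is_cover (uv_rect u0 u1 v0 v1) ts.
Proof.
  intros; apply is_cover_of_check_in_tile_grid with (uv_rectb u0 u1 v0 v1); auto.
  - apply uv_rectb_spec.
  - unfold uv_rect; lia.
Qed.

Definition b_strip_end : region := uv_rect 0 2 6 13.
Definition b_strip_block : region := uv_rect 3 8 6 13.
Definition a_strip_end : region := uv_rect 5 12 1 3.
Definition a_strip_block : region := uv_rect 5 12 4 9.
Definition corner_tile : region :=
  fun c => uv_rect 3 12 4 13 c /\ ~ uv_rect 3 4 4 5 c.

Definition b_strip_end_cover : list tromino :=
  [Tromino (-3) 3 (-2) 3; Tromino (-4) 4 (-3) 4; Tromino (-5) 5 (-4) 5; Tromino (-6) 6 (-5) 6].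
Definition b_strip_block_cover : list tromino :=
  [Tromino 0 6 1 6; Tromino (-1) 7 0 7; Tromino (-2) 8 (-1) 8; Tromino (-3) 9 (-2) 9;
   Tromino (-5) 8 (-5) 9; Tromino (-4) 7 (-4) 8; Tromino (-3) 6 (-3) 7; Tromino (-2) 5 (-2) 6].
Definition a_strip_end_cover : list tromino :=
  [Tromino 1 3 1 3; Tromino 2 4 2 4; Tromino 3 5 3 5; Tromino 4 6 4 6].
Definition a_strip_block_cover : list tromino :=
  [Tromino (-2) 7 (-2) 8; Tromino (-1) 6 (-1) 7; Tromino 0 5 0 6; Tromino 1 6 1 6;
   Tromino 3 7 4 7; Tromino 2 8 3 8; Tromino 1 9 2 9; Tromino 0 8 1 9].
Definition corner_tile_cover : list tromino :=
  [Tromino 3 7 4 7; Tromino 2 8 3 8; Tromino (-5) 7 (-5) 7; Tromino 1 9 2 9;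
   Tromino 0 10 1 10; Tromino (-1) 11 0 11; Tromino (-3) 10 (-3) 11; Tromino (-4) 8 (-4) 8;
   Tromino (-2) 9 (-2) 10; Tromino (-1) 8 (-1) 9; Tromino (-3) 7 (-3) 8; Tromino (-3) 5 (-3) 5;
   Tromino 1 7 2 8; Tromino 1 5 2 5; Tromino (-1) 6 (-1) 6; Tromino (-1) 5 0 6].

Lemma has_cover_b_strip_end : has_cover b_strip_end.
Proof.
  exists b_strip_end_cover; apply is_cover_uv_rect_of_check; [lia..|vm_compute; reflexivity].
Qed.

Lemma has_cover_b_strip_block : has_cover b_strip_block.
Proof.
  exists b_strip_block_cover; apply is_cover_uv_rect_of_check; [lia..|vm_compute; reflexivity].
Qed.

Lemma has_cover_a_strip_end : has_cover a_strip_end.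
Proof.
  exists a_strip_end_cover; apply is_cover_uv_rect_of_check; [lia..|vm_compute; reflexivity].
Qed.

Lemma has_cover_a_strip_block : has_cover a_strip_block.
Proof.
  exists a_strip_block_cover; apply is_cover_uv_rect_of_check; [lia..|vm_compute; reflexivity].
Qed.

Lemma has_cover_corner_tile : has_cover corner_tile.
Proof.
  exists corner_tile_cover.
  apply is_cover_of_check_in_tile_grid
    with (fun c => uv_rectb 3 12 4 13 c && negb (uv_rectb 3 4 4 5 c)).
  - intros c; unfold corner_tile.
    rewrite andb_true_iff, negb_true_iff, <- not_true_iff_false, <- !uv_rectb_spec; tauto.
  - unfold corner_tile, uv_rect; lia.
  - vm_compute; reflexivity.
Qed.

Lemma exists_block (lo w n x : Z) :
  0 < w -> lo <= x < lo + w * n ->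
  exists j, 0 <= j < n /\ lo + w * j <= x < lo + w * j + w.
Proof.
  intros Hw Hx; exists ((x - lo) / w).
  pose proof (Z.div_mod (x - lo) w ltac:(lia)).
  pose proof (Z.mod_pos_bound (x - lo) w Hw).
  assert (0 <= (x - lo) / w < n); [|split; [auto|lia]].
  split; [apply Z.div_pos; lia | apply Z.div_lt_upper_bound; lia].
Qed.

(* In (u, v) coordinates, with a = 3K + 2 and b = 3M + 2: AR_{a,b} is
   [0, 6M+4] x [1, 6K+5]; the b-strip is [0, 2] x [6K+6, 6K+13] followed by
   the blocks [6j+3, 6j+8] x [6K+6, 6K+13]; the a-strip is
   [6M+5, 6M+12] x [1, 3] followed by the blocks [6M+5, 6M+12] x [6j+4, 6j+9];
   the corner fills [6M+3, 6M+12] x [6K+4, 6K+13] outside AR_{a,b}. *)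
Definition grown_aztec_pieces (K M : Z) : region :=
  region_union (aztec_rect (3 * K + 2) (3 * M + 2))
 (region_union (translate (-3 * K) (3 * K) b_strip_end)
 (region_union (region_bigunion M
                  (fun j => translate (3 * j - 3 * K) (3 * j + 3 * K) b_strip_block))
 (region_union (translate (3 * M) (3 * M) a_strip_end)
 (region_union (region_bigunion K
                  (fun j => translate (3 * M - 3 * j) (3 * M + 3 * j) a_strip_block))
   (translate (3 * M - 3 * K) (3 * M + 3 * K) corner_tile))))).

Ltac unfold_regions :=
  unfold grown_aztec_pieces, regions_disjoint, region_union, region_bigunion, translate,
    aztec_rect, b_strip_end, b_strip_block, a_strip_end, a_strip_block, corner_tile,
    uv_rect in *;
  cbn [fst snd] in *.

Ltac destruct_hyps :=
  repeat match goal with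
         | H : exists _, _ |- _ => destruct H
         | H : _ /\ _ |- _ => destruct H
         | H : _ \/ _ |- _ => destruct H
         end.

Lemma aztec_rect_grown_pieces (K M : Z) c :
  0 <= K -> 0 <= M ->
  aztec_rect (3 * K + 6) (3 * M + 6) c <-> grown_aztec_pieces K M c.
Proof.
  intros HK HM; destruct c as [x y]; unfold_regions; split.
  - intros Hc.
    destruct (Z_le_gt_dec (6 * K + 6) (y - x)).
    + destruct (Z_le_gt_dec (x + y) 2); [right; left; lia|].
      destruct (Z_le_gt_dec (x + y) (6 * M + 2)); [|do 5 right; lia].
      destruct (exists_block 3 6 M (x + y)) as [j [Hj Hb]]; [lia..|].
      do 2 right; left; exists j; split; [auto|lia].
    + destruct (Z_le_gt_dec (x + y) (6 * M + 4)); [left; lia|].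
      destruct (Z_le_gt_dec (y - x) 3); [do 3 right; left; lia|].
      destruct (Z_le_gt_dec (y - x) (6 * K + 3)); [|do 5 right; lia].
      destruct (exists_block 4 6 K (y - x)) as [j [Hj Hb]]; [lia..|].
      do 4 right; left; exists j; split; [auto|lia].
  - intros Hc; destruct_hyps; lia.
Qed.

Ltac pieces_disjoint := repeat intro; unfold_regions; destruct_hyps; lia.

Lemma has_cover_grown_aztec_pieces (K M : Z) :
  0 <= K -> 0 <= M -> has_cover (aztec_rect (3 * K + 2) (3 * M + 2)) -> has_cover (grown_aztec_pieces K M).
Proof.
  intros HK HM Hold; unfold grown_aztec_pieces.
  apply has_cover_union; [pieces_disjoint | exact Hold |].
  apply has_cover_union;
    [pieces_disjoint | apply has_cover_translate, has_cover_b_strip_end |].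
  apply has_cover_union;
    [pieces_disjoint
    | apply has_cover_bigunion;
      [intros; apply has_cover_translate, has_cover_b_strip_block | pieces_disjoint] |].
  apply has_cover_union;
    [pieces_disjoint | apply has_cover_translate, has_cover_a_strip_end |].
  apply has_cover_union;
    [pieces_disjoint
    | apply has_cover_bigunion;
      [intros; apply has_cover_translate, has_cover_a_strip_block | pieces_disjoint]
    | apply has_cover_translate, has_cover_corner_tile].
Qed.

Lemma three_divides_succ_pos (a : Z) :
  0 < a -> (3 | a + 1) -> exists K, 0 <= K /\ a = 3 * K + 2.
Proof. intros Ha [q Hq]; exists (q - 1); lia. Qed.

Theorem lemma3 (a b : Z) (ha : 0 < a) (hb : 0 < b)
  (h3a : (3 | a + 1)) (h3b : (3 | b + 1)) :
  has_cover (aztec_rect a b) -> has_cover (aztec_rect (a + 4) (b + 4)).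
Proof.
  destruct (three_divides_succ_pos a ha h3a) as [K [HK ->]].
  destruct (three_divides_succ_pos b hb h3b) as [M [HM ->]].
  intros Hcover.
  replace (3 * K + 2 + 4) with (3 * K + 6) by lia.
  replace (3 * M + 2 + 4) with (3 * M + 6) by lia.
  apply has_cover_ext with (grown_aztec_pieces K M).
  - intros c; symmetry; apply aztec_rect_grown_pieces; assumption.
  - apply has_cover_grown_aztec_pieces; assumption.
Qed.
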